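(* Let $A=(Q,R,F_A)$ be an RNNA, regarded as the coalgebra $c\colon Q\to G\mathcal{P}_{\mathsf{ufs}}Q=2\times(\mathcal{P}_{\mathsf{ufs}}Q)^{\mathbb{A}}\times[\mathbb{A}]\mathcal{P}_{\mathsf{ufs}}Q$, $c(q)=(f(q),\,a\mapsto\{q':q\xrightarrow{a}q'\},\,\langle a\rangle\{q':q\xrightarrow{\mathord{|}a}q'\})$ with $f(q)=1$ iff $q\in F_A$ and $a$ fresh for $q$. Let $c^\sharp\colon\mathcal{P}_{\mathsf{ufs}}Q\to G\mathcal{P}_{\mathsf{ufs}}Q$ be its determinization, $c^\sharp(S)=(\max_{s\in S}f(s),\,a\mapsto\bigcup_{s\in S}\{q':s\xrightarrow{a}q'\},\,\langle a\rangle\bigcup_{s\in S}\{q':s\xrightarrow{\mathord{|}a}q'\})$ with $a$ fresh for $S$, let $h$ be the unique $G$-coalgebra homomorphism from $(\mathcal{P}_{\mathsf{ufs}}Q,c^\sharp)$ to the terminal $G$-coalgebra $(\mathcal{P}_{\mathsf{fs}}(\overline{\mathbb{A}}^*/{=_\alpha}),\tau)$, and let $\ddagger c(q)=h(\{q\})$. Then for every state $q$, $\ddagger c(q)$ is the bar language accepted by $q$.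
   Context: Fix a countably infinite set $\mathbb{A}$ of names; $\mathsf{Nom}$: nominal sets and equivariant maps; $\mathrm{supp}$ least support, ''fresh'' means not in the support. $[\mathbb{A}]X=(\mathbb{A}\times X)/\sim$, $(a,x)\sim(b,y)$ iff $(a\,c)\cdot x=(b\,c)\cdot y$ for fresh $c$, classes $\langle a\rangle x$. $\mathcal{P}_{\mathsf{fs}}$, $\mathcal{P}_{\mathsf{ufs}}$: finitely / uniformly finitely supported ($\bigcup_{x\in A}\mathrm{supp}(x)$ finite) subsets. $GX=2\times X^{\mathbb{A}}\times[\mathbb{A}]X$, $2=\{0,1\}$. Bar strings: words over $\overline{\mathbb{A}}=\mathbb{A}\cup\{\mathord{|}a:a\in\mathbb{A}\}$; $=_\alpha$ the least equivalence with $x\,\mathord{|}a\,v=_\alpha x\,\mathord{|}b\,w$ whenever $\langle a\rangle v=\langle b\rangle w$ (i.e. $a=b,v=w$, or $b$ fresh for $v$ and $(a\,b)\cdot v=w$), classes $[w]_\alpha$. The terminal $G$-coalgebra has carrier $\mathcal{P}_{\mathsf{fs}}(\overline{\mathbb{A}}^*/{=_\alpha})$ and $\tau(S)=(b,a\mapsto\{[w]_\alpha:[aw]_\alpha\in S\},\langle a\rangle\{[w]_\alpha:[\mathord{|}a\,w]_\alpha\in S\})$, $b=1$ iff $[\varepsilon]_\alpha\in S$, $a$ fresh for $S$. An RNNA $(Q,R,F_A)$: orbit-finite nominal set $Q$, equivariant $R\subseteq Q\times\overline{\mathbb{A}}\times Q$ (write $q\xrightarrow{\sigma}q'$), equivariant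 $F_A\subseteq Q$ of final states, such that (a) if $q\xrightarrow{\mathord{|}a}q'$ and $\langle a\rangle q'=\langle b\rangle q''$ then $q\xrightarrow{\mathord{|}b}q''$; (b) for each $q$ the sets $\{(a,q'):q\xrightarrow{a}q'\}$ and $\{\langle a\rangle q':q\xrightarrow{\mathord{|}a}q'\}$ are finite. $q$ accepts $w=\sigma_1\cdots\sigma_n$ if there is a run $q\xrightarrow{\sigma_1}q_1\cdots\xrightarrow{\sigma_n}q_n$ with $q_n$ final; the accepted bar language is $\{[w]_\alpha:q\text{ accepts }w\}$. *)

From Stdlib Require Import List Arith Lia.
Import ListNotations.

Definition name := nat.

Record perm := Perm {
  pf : name -> name;
  pg : name -> name;
  pfg : forall a, pf (pg a) = a;
  pgf : forall a, pg (pf a) = a;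
  pfin : exists l : list name, forall a, ~ In a l -> pf a = a }.

Definition pid : perm.
Proof. refine (Perm (fun a => a) (fun a => a) _ _ _); auto. exists []; auto. Defined.

Definition pinv (p : perm) : perm.
Proof.
  refine (Perm (pg p) (pf p) (pgf p) (pfg p) _).
  destruct (pfin p) as [l Hl]. exists l. intros a Ha.
  rewrite <- (Hl a Ha) at 1. apply pgf.
Defined.

Definition pcomp (p q : perm) : perm.
Proof.
  refine (Perm (fun a => pf p (pf q a)) (fun a => pg q (pg p a)) _ _ _).
  - intro a. rewrite pfg. apply pfg.
  - intro a. rewrite pgf. apply pgf.
  - destruct (pfin p) as [l1 H1], (pfin q) as [l2 H2]. exists (l1 ++ l2).
    intros a Ha. rewrite H2, H1; auto; intro; apply Ha; apply in_or_app; auto.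
Defined.

Definition swap_fun (a b c : name) : name :=
  if Nat.eqb c a then b else if Nat.eqb c b then a else c.

Lemma swap_fun_invol a b c : swap_fun a b (swap_fun a b c) = c.
Proof.
  unfold swap_fun.
  destruct (Nat.eqb_spec c a) as [->|Hca].
  - destruct (Nat.eqb_spec b a) as [->|Hba]; [reflexivity|].
    destruct (Nat.eqb_spec b b); [reflexivity|congruence].
  - destruct (Nat.eqb_spec c b) as [->|Hcb].
    + destruct (Nat.eqb_spec a a); [reflexivity|congruence].
    + destruct (Nat.eqb_spec c a); [congruence|].
      destruct (Nat.eqb_spec c b); [congruence|reflexivity].
Qed.

Definition tr (a b : name) : perm.
Proof.
  refine (Perm (swap_fun a b) (swap_fun a b) (swap_fun_invol a b) (swap_fun_invol a b) _).
  exists [a; b]. intros c Hc. unfold swap_fun.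
  destruct (Nat.eqb_spec c a); [subst; simpl in Hc; tauto|].
  destruct (Nat.eqb_spec c b); [subst; simpl in Hc; tauto|]. reflexivity.
Defined.

Definition supports {X : Type} (act : perm -> X -> X) (l : list name) (x : X) : Prop :=
  forall p : perm, (forall a, In a l -> pf p a = a) -> act p x = x.

(* a is fresh for x iff a is not in the least support of x, i.e. some finite
   support of x avoids a *)
Definition fresh {X : Type} (act : perm -> X -> X) (a : name) (x : X) : Prop :=
  exists l, supports act l x /\ ~ In a l.

Definition abs_eq {X : Type} (act : perm -> X -> X) (a : name) (x : X) (b : name) (y : X) : Prop :=
  exists c, c <> a /\ c <> b /\ fresh act c x /\ fresh act c y /\
            act (tr a c) x = act (tr b c) y.

Record nomset := NomSet {
  ncar :> Type;
  nact : perm -> ncar -> ncar;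
  nact_id : forall x, nact pid x = x;
  nact_comp : forall p q x, nact p (nact q x) = nact (pcomp p q) x;
  nfin : forall x, exists l, supports nact l x }.

Definition orbit_finite (X : nomset) : Prop :=
  exists l : list X, forall x : X, exists y p, In y l /\ x = nact X p y.

Definition setact (X : nomset) (p : perm) (S : X -> Prop) : X -> Prop :=
  fun x => S (nact X (pinv p) x).

(* uniformly finitely supported subsets: a single finite set supports all
   elements (equivalently, the union of their least supports is finite) *)
Definition ufs (X : nomset) (S : X -> Prop) : Prop :=
  exists l, forall x, S x -> supports (nact X) l x.

Inductive letter := Plain (a : name) | Bar (a : name).
Definition word := list letter.

Definition letter_name (s : letter) : name := match s with Plain a => a | Bar a => a end.
Definition lact (p : perm) (s : letter) : letter :=
  match s with Plain a => Plain (pf p a) | Bar a => Bar (pf p a) end.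
Definition wact (p : perm) (w : word) : word := map (lact p) w.

(* names occurring in w = least support of w *)
Definition wfresh (b : name) (w : word) : Prop := ~ In b (map letter_name w).

Definition abs_word_eq (a : name) (v : word) (b : name) (w : word) : Prop :=
  (a = b /\ v = w) \/ (wfresh b v /\ wact (tr a b) v = w).

Inductive alpha : word -> word -> Prop :=
| alpha_refl w : alpha w w
| alpha_sym v w : alpha v w -> alpha w v
| alpha_trans u v w : alpha u v -> alpha v w -> alpha u w
| alpha_step x a v b w : abs_word_eq a v b w ->
    alpha (x ++ Bar a :: v) (x ++ Bar b :: w).

(* A set of alpha-classes of bar strings is represented by the alpha-saturated
   set of bar strings it covers. *)
Definition lang := word -> Prop.
Definition langact (p : perm) (L : lang) : lang := fun w => L (wact (pinv p) w).
Definition alpha_closed (L : lang) : Prop := forall v w, alpha v w -> L v -> L w.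
Definition fs_bar_lang (L : lang) : Prop :=
  alpha_closed L /\ exists l, supports langact l L.

Definition is_RNNA (Q : nomset) (R : Q -> letter -> Q -> Prop) (F : Q -> Prop) : Prop :=
  orbit_finite Q /\
  (forall p q s q', R q s q' -> R (nact Q p q) (lact p s) (nact Q p q')) /\
  (forall p q, F q -> F (nact Q p q)) /\
  (forall q a q' b q'', R q (Bar a) q' -> abs_eq (nact Q) a q' b q'' -> R q (Bar b) q'') /\
  (forall q, exists l : list (name * Q), forall a q', R q (Plain a) q' -> In (a, q') l) /\
  (forall q, exists l : list (name * Q), forall b q'', R q (Bar b) q'' ->
       exists a q', In (a, q') l /\ abs_eq (nact Q) a q' b q'').

Fixpoint accepts {Q : nomset} (R : Q -> letter -> Q -> Prop) (F : Q -> Prop)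
    (q : Q) (w : word) : Prop :=
  match w with
  | [] => F q
  | s :: v => exists q', R q s q' /\ accepts R F q' v
  end.

Definition bar_language {Q : nomset} (R : Q -> letter -> Q -> Prop) (F : Q -> Prop)
    (q : Q) : lang :=
  fun w => exists v, alpha v w /\ accepts R F q v.

(* ---------- Coalgebra homomorphism (P_ufs Q, c#) -> (P_fs(bar/=a), tau) ----------
   h is an equivariant map P_ufs Q -> P_fs(bar strings/=alpha) with
   tau o h = G h o c#, written componentwise for G X = 2 x X^A x [A]X. *)
Definition succ_set {Q : nomset} (R : Q -> letter -> Q -> Prop) (S : Q -> Prop)
    (s : letter) : Q -> Prop :=
  fun q' => exists q, S q /\ R q s q'.

Definition is_coalg_hom (Q : nomset) (R : Q -> letter -> Q -> Prop) (F : Q -> Prop)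
    (h : (Q -> Prop) -> lang) : Prop :=
  (forall S, ufs Q S -> fs_bar_lang (h S)) /\
  (forall p S, ufs Q S -> h (setact Q p S) = langact p (h S)) /\
  (forall S, ufs Q S -> (h S [] <-> exists q, S q /\ F q)) /\
  (forall S a, ufs Q S ->
     (fun w => h S (Plain a :: w)) = h (succ_set R S (Plain a))) /\
  (forall S a b, ufs Q S -> fresh langact a (h S) -> fresh (setact Q) b S ->
     abs_eq langact a (fun w => h S (Bar a :: w)) b (h (succ_set R S (Bar b)))).

(* For a finite set S of states, h S and the union of the bar languages of the
   states in S satisfy the same recursion on words: the empty word is in them
   iff S meets F, and after a plain letter a both pass to the a-successors of S.
   For a bar letter, h is only constrained up to alpha-equivalence, so the bound
   name is first renamed to a name e fresh for S, for h S and for the rest of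
   the word; then h S (|e w) = h T w for the set T of |e-successors of S, and
   alpha-invariance of the transitions renames runs of the automaton in the same
   way. Finite branching keeps successor sets finite, hence uniformly supported,
   so induction on the length of words goes through. *)

From Stdlib Require Import List Arith Lia FunctionalExtensionality PropExtensionality Classical.
Import ListNotations.

Lemma exists_fresh_name (l : list name) : exists d, ~ In d l.
Proof.
  exists (S (list_max l)). intro Hin.
  assert (Hmax : list_max l <= list_max l) by reflexivity.
  apply list_max_le in Hmax. rewrite Forall_forall in Hmax.
  specialize (Hmax _ Hin). lia.
Qed.

Lemma swap_fun_l a b : swap_fun a b a = b.
Proof. unfold swap_fun. now rewrite Nat.eqb_refl. Qed.

Lemma swap_fun_r a b : swap_fun a b b = a.
Proof.
  unfold swap_fun. destruct (Nat.eqb_spec b a) as [-> | _]; [reflexivity|].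
  now rewrite Nat.eqb_refl.
Qed.

Lemma swap_fun_other a b c : c <> a -> c <> b -> swap_fun a b c = c.
Proof.
  intros Hca Hcb. unfold swap_fun.
  destruct (Nat.eqb_spec c a); [congruence|].
  destruct (Nat.eqb_spec c b); congruence.
Qed.

Lemma pf_tr a b n : pf (tr a b) n = swap_fun a b n.
Proof. reflexivity. Qed.

Lemma pf_pcomp p q n : pf (pcomp p q) n = pf p (pf q n).
Proof. reflexivity. Qed.

Lemma supports_incl {Y : Type} (act : perm -> Y -> Y) l l' y :
  supports act l y -> incl l l' -> supports act l' y.
Proof. intros Hl Hincl p Hp. apply Hl. intros n Hn. apply Hp, Hincl, Hn. Qed.

Section NominalSet.

Variable X : nomset.

Lemma nact_pointwise_id p x : (forall n, pf p n = n) -> nact X p x = x.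
Proof. intro Hp. destruct (nfin X x) as [l Hl]. apply Hl. intros n _. apply Hp. Qed.

Lemma nact_pinv_r p x : nact X p (nact X (pinv p) x) = x.
Proof. rewrite nact_comp. apply nact_pointwise_id. intro n. apply pfg. Qed.

Lemma nact_tr_invol a b x : nact X (tr a b) (nact X (tr a b) x) = x.
Proof. rewrite nact_comp. apply nact_pointwise_id. intro n. apply swap_fun_invol. Qed.

Lemma nact_eq_on_support l x p p' :
  supports (nact X) l x -> (forall n, In n l -> pf p n = pf p' n) ->
  nact X p x = nact X p' x.
Proof.
  intros Hl Hpp'.
  assert (Hx : nact X (pinv p) (nact X p' x) = x).
  { rewrite nact_comp. apply Hl. intros n Hn. cbn. rewrite <- Hpp' by exact Hn. apply pgf. }
  rewrite <- Hx at 1. apply nact_pinv_r.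
Qed.

Lemma supports_nact l x p :
  supports (nact X) l x -> supports (nact X) (map (pf p) l) (nact X p x).
Proof.
  intros Hl r Hr. rewrite nact_comp. apply (nact_eq_on_support l); [exact Hl|].
  intros n Hn. apply Hr, in_map, Hn.
Qed.

Lemma fresh_nact p c x : fresh (nact X) c x -> fresh (nact X) (pf p c) (nact X p x).
Proof.
  intros (l & Hl & Hc). exists (map (pf p) l). split; [apply supports_nact, Hl|].
  intro Hin. apply in_map_iff in Hin as (n & Hn & Hin).
  apply (f_equal (pg p)) in Hn. rewrite !pgf in Hn. subst n. contradiction.
Qed.

Lemma supports_remove_fresh l x c :
  supports (nact X) l x -> fresh (nact X) c x ->
  supports (nact X) (remove Nat.eq_dec c l) x.
Proof.
  intros Hl (l' & Hl' & Hc) p Hp.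
  destruct (pfin p) as [lp Hlp].
  destruct (exists_fresh_name (c :: l ++ l' ++ lp)) as [d Hd].
  simpl in Hd. rewrite !in_app_iff in Hd.
  assert (Hcd : nact X (tr c d) x = x).
  { apply Hl'. intros n Hn. apply swap_fun_other; intros ->; tauto. }
  (* conjugating p by (c d) gives a permutation that fixes all of l *)
  assert (Hconj : nact X (tr c d) (nact X p (nact X (tr c d) x)) = x).
  { rewrite !nact_comp. apply Hl. intros n Hn. rewrite !pf_pcomp, !pf_tr.
    destruct (Nat.eq_dec n c) as [-> | Hnc].
    - rewrite swap_fun_l, Hlp by tauto. apply swap_fun_r.
    - assert (Hnd : n <> d) by (intros ->; tauto).
      rewrite (swap_fun_other c d n Hnc Hnd), Hp by (apply in_in_remove; auto).
      apply swap_fun_other; auto. }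
  rewrite Hcd in Hconj. apply (f_equal (nact X (tr c d))) in Hconj.
  rewrite nact_tr_invol, Hcd in Hconj. exact Hconj.
Qed.

Lemma exists_support_avoiding ds x :
  (forall c, In c ds -> fresh (nact X) c x) ->
  exists l, supports (nact X) l x /\ forall c, In c ds -> ~ In c l.
Proof.
  induction ds as [|c ds IH]; intro Hds.
  - destruct (nfin X x) as [l Hl]. exists l. split; [exact Hl | intros c []].
  - destruct IH as (l & Hl & Havoid); [intros c' Hc'; apply Hds; now right|].
    exists (remove Nat.eq_dec c l). split.
    + apply supports_remove_fresh; [exact Hl | apply Hds; now left].
    + intros c' [<- | Hc'] Hin; [exact (remove_In _ _ _ Hin)|].
      apply in_remove in Hin. exact (Havoid c' Hc' (proj1 Hin)).
Qed.

Lemma abs_eq_rename l x d e :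
  supports (nact X) l x -> ~ In e l -> abs_eq (nact X) d x e (nact X (tr d e) x).
Proof.
  intros Hl He. destruct (exists_fresh_name (d :: e :: l)) as [c Hc]. simpl in Hc.
  assert (Hcx : fresh (nact X) c x) by (exists l; split; [exact Hl | tauto]).
  exists c. split; [|split; [|split; [exact Hcx | split]]].
  - intros ->; tauto.
  - intros ->; tauto.
  - pose proof (fresh_nact (tr d e) c x Hcx) as Hc'.
    rewrite pf_tr, swap_fun_other in Hc' by (intros ->; tauto). exact Hc'.
  - rewrite nact_comp. apply (nact_eq_on_support l); [exact Hl|].
    intros n Hn. rewrite pf_pcomp, !pf_tr.
    assert (Hne : n <> e) by (intros ->; tauto).
    assert (Hnc : n <> c) by (intros ->; tauto).
    destruct (Nat.eq_dec n d) as [-> | Hnd].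
    + now rewrite !swap_fun_l.
    + now rewrite (swap_fun_other d c n), (swap_fun_other d e n), (swap_fun_other e c n).
Qed.

Lemma abs_eq_functional a x b y1 y2 :
  abs_eq (nact X) a x b y1 -> abs_eq (nact X) a x b y2 -> y1 = y2.
Proof.
  intros (c & Hca & Hcb & Hcx & Hcy1 & E1) (d & Hda & Hdb & Hdx & _ & E2).
  assert (Y1 : y1 = nact X (tr b c) (nact X (tr a c) x))
    by (rewrite E1, nact_tr_invol; reflexivity).
  assert (Y2 : y2 = nact X (tr b d) (nact X (tr a d) x))
    by (rewrite E2, nact_tr_invol; reflexivity).
  destruct (Nat.eq_dec a b) as [<- | Hab].
  { rewrite Y1, Y2, !nact_tr_invol. reflexivity. }
  assert (Hbx : fresh (nact X) b x).
  { assert (Ex : x = nact X (tr a c) (nact X (tr b c) y1))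
      by (rewrite <- E1, nact_tr_invol; reflexivity).
    pose proof (fresh_nact (tr a c) _ _ (fresh_nact (tr b c) c y1 Hcy1)) as Hb.
    rewrite !pf_tr, swap_fun_r, (swap_fun_other a c b) in Hb by congruence.
    rewrite Ex. exact Hb. }
  destruct (exists_support_avoiding [b; c; d] x) as (l & Hl & Havoid).
  { intros n [<- | [<- | [<- | []]]]; assumption. }
  rewrite Y1, Y2, !nact_comp. apply (nact_eq_on_support l); [exact Hl|].
  intros n Hn. rewrite !pf_pcomp, !pf_tr.
  assert (Hnb : n <> b) by (intros ->; apply (Havoid b); simpl; tauto).
  assert (Hnc : n <> c) by (intros ->; apply (Havoid c); simpl; tauto).
  assert (Hnd : n <> d) by (intros ->; apply (Havoid d); simpl; tauto).
  destruct (Nat.eq_dec n a) as [-> | Hna].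
  - now rewrite !swap_fun_l, !swap_fun_r.
  - now rewrite (swap_fun_other a c n), (swap_fun_other b c n),
      (swap_fun_other a d n), (swap_fun_other b d n).
Qed.

Lemma fresh_setact_of_uniform_support (S : X -> Prop) l e :
  (forall x, S x -> supports (nact X) l x) -> ~ In e l -> fresh (setact X) e S.
Proof.
  intros HS He. exists l. split; [|exact He].
  intros p Hp. unfold setact. apply functional_extensionality. intro x.
  apply propositional_extensionality. split; intro Hx.
  - pose proof (HS _ Hx p Hp) as E. rewrite nact_pinv_r in E. now rewrite E.
  - rewrite (HS x Hx (pinv p)); [exact Hx|].
    intros n Hn. cbn. rewrite <- (Hp n Hn) at 1. apply pgf.
Qed.

End NominalSet.

Definition finite_set {Y : Type} (S : Y -> Prop) : Prop :=
  exists K : list Y, forall y, S y -> In y K.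

Lemma finite_set_sub {Y : Type} (S T : Y -> Prop) :
  (forall y, S y -> T y) -> finite_set T -> finite_set S.
Proof. intros HST [K HK]. exists K. intros y Hy. apply HK, HST, Hy. Qed.

Lemma finite_set_union_list {A B : Type} (K : list A) (P : A -> B -> Prop) :
  (forall k, In k K -> finite_set (P k)) ->
  finite_set (fun y => exists k, In k K /\ P k y).
Proof.
  induction K as [|k K IH]; intro HP.
  - exists []. intros y (k & [] & _).
  - destruct (HP k (or_introl eq_refl)) as [l1 H1].
    destruct IH as [l2 H2]; [intros k' Hk'; apply HP; now right|].
    exists (l1 ++ l2). intros y (k' & [<- | Hk'] & Hy); apply in_or_app.
    + left. apply H1, Hy.
    + right. apply H2. now exists k'.
Qed.

Lemma finite_set_subsingleton {Y : Type} (S : Y -> Prop) :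
  (forall y1 y2, S y1 -> S y2 -> y1 = y2) -> finite_set S.
Proof.
  intro Huniq. destruct (classic (exists y, S y)) as [[y Hy] | Hnone].
  - exists [y]. intros y' Hy'. left. exact (Huniq y y' Hy Hy').
  - exists []. intros y Hy. apply Hnone. now exists y.
Qed.

Lemma finite_set_ufs (X : nomset) (S : X -> Prop) : finite_set S -> ufs X S.
Proof.
  intros [K HK].
  enough (HKsupp : exists l, forall x, In x K -> supports (nact X) l x).
  { destruct HKsupp as [l Hl]. exists l. intros x Hx. apply Hl, HK, Hx. }
  clear HK. induction K as [|k K [l2 H2]].
  - exists []. intros x [].
  - destruct (nfin X k) as [l1 H1]. exists (l1 ++ l2). intros x [<- | Hx].
    + apply (supports_incl _ l1); [exact H1 | apply incl_appl, incl_refl].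
    + apply (supports_incl _ l2); [apply H2, Hx | apply incl_appr, incl_refl].
Qed.

Lemma wact_pinv_l p w : wact (pinv p) (wact p w) = w.
Proof.
  unfold wact. rewrite map_map. transitivity (map (fun s => s) w); [|apply map_id].
  apply map_ext. intros [a|a]; cbn; f_equal; apply pgf.
Qed.

Lemma length_wact p w : length (wact p w) = length w.
Proof. apply length_map. Qed.

Lemma alpha_cons s v w : alpha v w -> alpha (s :: v) (s :: w).
Proof.
  induction 1.
  - apply alpha_refl.
  - now apply alpha_sym.
  - eapply alpha_trans; eauto.
  - now apply (alpha_step (s :: x)).
Qed.

Lemma alpha_bar_rename b e w :
  wfresh e w -> alpha (Bar b :: w) (Bar e :: wact (tr b e) w).
Proof. intro He. apply (alpha_step [] b w e). right. now split. Qed.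

Section RNNA.

Variables (Q : nomset) (R : Q -> letter -> Q -> Prop) (F : Q -> Prop).

Hypothesis R_equivariant :
  forall p q s q', R q s q' -> R (nact Q p q) (lact p s) (nact Q p q').
Hypothesis F_equivariant : forall p q, F q -> F (nact Q p q).
Hypothesis R_bar_alpha : forall q a q' b q'',
  R q (Bar a) q' -> abs_eq (nact Q) a q' b q'' -> R q (Bar b) q''.
Hypothesis R_plain_finite : forall q, exists l : list (name * Q),
  forall a q', R q (Plain a) q' -> In (a, q') l.
Hypothesis R_bar_finite : forall q, exists l : list (name * Q),
  forall b q'', R q (Bar b) q'' -> exists a q', In (a, q') l /\ abs_eq (nact Q) a q' b q''.

Lemma accepts_nact p q w : accepts R F q w -> accepts R F (nact Q p q) (wact p w).
Proof.
  revert q. induction w as [|s w IH]; cbn; intros q Hacc.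
  - now apply F_equivariant.
  - destruct Hacc as (q' & Hstep & Hacc). exists (nact Q p q'). auto.
Qed.

Lemma finite_succ_plain S a : finite_set S -> finite_set (succ_set R S (Plain a)).
Proof.
  intros [K HK]. apply (finite_set_sub _ (fun y => exists k, In k K /\ R k (Plain a) y)).
  - intros y (k & Hk & Hy). exists k. auto.
  - apply finite_set_union_list. intros k _. destruct (R_plain_finite k) as [l Hl].
    exists (map snd l). intros y Hy. exact (in_map snd _ _ (Hl a y Hy)).
Qed.

Lemma finite_succ_bar S b : finite_set S -> finite_set (succ_set R S (Bar b)).
Proof.
  intros [K HK]. apply (finite_set_sub _ (fun y => exists k, In k K /\ R k (Bar b) y)).
  - intros y (k & Hk & Hy). exists k. auto.
  - apply finite_set_union_list. intros k _. destruct (R_bar_finite k) as [l Hl].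
    apply (finite_set_sub _
      (fun y => exists aq, In aq l /\ abs_eq (nact Q) (fst aq) (snd aq) b y)).
    + intros y Hy. destruct (Hl b y Hy) as (a & q' & Hin & Habs). now exists (a, q').
    + apply finite_set_union_list. intros [a q'] _.
      apply finite_set_subsingleton. intros y1 y2. apply abs_eq_functional.
Qed.

Variable h : (Q -> Prop) -> lang.

Hypothesis h_fs_bar_lang : forall S, ufs Q S -> fs_bar_lang (h S).
Hypothesis h_nil : forall S, ufs Q S -> (h S [] <-> exists q, S q /\ F q).
Hypothesis h_plain : forall S a, ufs Q S ->
  (fun w => h S (Plain a :: w)) = h (succ_set R S (Plain a)).
Hypothesis h_bar : forall S a b, ufs Q S -> fresh langact a (h S) -> fresh (setact Q) b S ->
  abs_eq langact a (fun w => h S (Bar a :: w)) b (h (succ_set R S (Bar b))).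

Lemma h_alpha_closed S : finite_set S -> alpha_closed (h S).
Proof. intro HS. apply h_fs_bar_lang, finite_set_ufs, HS. Qed.

Lemma h_plain_cons S a w :
  finite_set S -> h S (Plain a :: w) = h (succ_set R S (Plain a)) w.
Proof.
  intro HS. exact (f_equal (fun L => L w) (h_plain S a (finite_set_ufs Q S HS))).
Qed.

Lemma exists_fresh_h_bar_cons S l : finite_set S ->
  exists e, ~ In e l /\ forall w, h S (Bar e :: w) = h (succ_set R S (Bar e)) w.
Proof.
  intro HS. pose proof (finite_set_ufs Q S HS) as HU.
  destruct (finite_set_ufs Q S HS) as [lS HlS].
  destruct (h_fs_bar_lang S HU) as [_ [lh Hlh]].
  destruct (exists_fresh_name (l ++ lh ++ lS)) as [e He]. rewrite !in_app_iff in He.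
  exists e. split; [tauto|]. intro w.
  assert (Heh : fresh langact e (h S)) by (exists lh; split; [exact Hlh | tauto]).
  assert (HeS : fresh (setact Q) e S)
    by (apply (fresh_setact_of_uniform_support Q S lS); [exact HlS | tauto]).
  destruct (h_bar S e e HU Heh HeS) as (c & _ & _ & _ & _ & E).
  apply (f_equal (fun L => L (wact (tr e c) w))) in E.
  unfold langact in E. cbv beta in E. now rewrite wact_pinv_l in E.
Qed.

Lemma h_complete S q w : finite_set S -> S q -> accepts R F q w -> h S w.
Proof.
  remember (length w) as n eqn:Hn. revert S q w Hn.
  induction n as [|n IH]; intros S q [|s w] Hn HS Hq Hacc; try discriminate.
  - apply h_nil; [exact (finite_set_ufs Q S HS) | now exists q].
  - injection Hn as Hn. destruct Hacc as (q1 & Hstep & Hacc). destruct s as [a|d].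
    + rewrite h_plain_cons by exact HS.
      apply (IH _ q1 w Hn (finite_succ_plain S a HS)); [now exists q | exact Hacc].
    + destruct (nfin Q q1) as [l1 Hl1].
      destruct (exists_fresh_h_bar_cons S (l1 ++ map letter_name w) HS)
        as (e & He & Hbar_e).
      rewrite in_app_iff in He.
      apply (h_alpha_closed S HS (Bar e :: wact (tr d e) w)).
      { apply alpha_sym, alpha_bar_rename. unfold wfresh. tauto. }
      rewrite Hbar_e. apply (IH _ (nact Q (tr d e) q1)).
      * now rewrite length_wact.
      * now apply finite_succ_bar.
      * exists q. split; [exact Hq|].
        apply (R_bar_alpha q d q1); [exact Hstep|].
        apply (abs_eq_rename Q l1); [exact Hl1 | tauto].
      * now apply accepts_nact.
Qed.

Lemma h_sound S w : finite_set S -> h S w -> exists q, S q /\ bar_language R F q w.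
Proof.
  remember (length w) as n eqn:Hn. revert S w Hn.
  induction n as [|n IH]; intros S [|s w] Hn HS Hw; try discriminate.
  - apply h_nil in Hw as (q & Hq & Hf); [|exact (finite_set_ufs Q S HS)].
    exists q. split; [exact Hq|]. exists []. split; [apply alpha_refl | exact Hf].
  - injection Hn as Hn. destruct s as [a|b].
    + rewrite h_plain_cons in Hw by exact HS.
      destruct (IH _ w Hn (finite_succ_plain S a HS) Hw)
        as (q1 & (q & Hq & Hstep) & v & Hv & Hacc).
      exists q. split; [exact Hq|]. exists (Plain a :: v).
      split; [now apply alpha_cons | now exists q1].
    + destruct (exists_fresh_h_bar_cons S (map letter_name w) HS) as (e & He & Hbar_e).
      pose proof (alpha_bar_rename b e w He) as Hren.
      apply (h_alpha_closed S HS _ _ Hren) in Hw. rewrite Hbar_e in Hw.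
      destruct (IH _ (wact (tr b e) w) ltac:(now rewrite length_wact)
                  (finite_succ_bar S e HS) Hw)
        as (q1 & (q & Hq & Hstep) & v & Hv & Hacc).
      exists q. split; [exact Hq|]. exists (Bar e :: v). split; [|now exists q1].
      apply (alpha_trans _ (Bar e :: wact (tr b e) w)); [now apply alpha_cons|].
      now apply alpha_sym.
Qed.

Lemma h_finite_set S : finite_set S -> h S = fun w => exists q, S q /\ bar_language R F q w.
Proof.
  intro HS. apply functional_extensionality. intro w.
  apply propositional_extensionality. split; [now apply h_sound|].
  intros (q & Hq & v & Hv & Hacc).
  apply (h_alpha_closed S HS v w Hv), (h_complete S q v HS Hq Hacc).
Qed.

End RNNA.

Theorem corollary4p22 (Q : nomset) (R : Q -> letter -> Q -> Prop) (F : Q -> Prop)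
  (HA : is_RNNA Q R F) (h : (Q -> Prop) -> lang) (Hh : is_coalg_hom Q R F h) :
  forall q : Q, h (fun x => x = q) = bar_language R F q.
Proof.
  destruct HA as (_ & HR & HF & Halpha & Hplain_fin & Hbar_fin).
  destruct Hh as (Hfs & _ & Hnil & Hplain & Hbar).
  intro q.
  rewrite (h_finite_set Q R F HR HF Halpha Hplain_fin Hbar_fin h Hfs Hnil Hplain Hbar).
  - apply functional_extensionality. intro w. apply propositional_extensionality.
    split; [now intros (q' & -> & Hw) | intro Hw; now exists q].
  - exists [q]. intros x ->. now left.
Qed.
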